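(* Let $p$ be an odd prime and $n,k$ positive integers with $\gcd(n,k)=s$. If $n/s$ is odd, then $\gcd(p^n-1,d)=1$ for $d=(p^{2k}+1)/2$ and for $d=p^{2k}-p^k+1$. *)

From mathcomp Require Import all_boot.

From mathcomp Require Import all_boot zify.

(* Let g be an odd common divisor of p^n - 1 and of a divisor of p^m + 1,
   where k | m.  Then p^n = 1 and p^(2m) = 1 modulo g, hence
   p^(gcd(n, 2m)) = 1.  As n/gcd(n, k) is odd, gcd(n, 2m) divides m, so
   p^m = 1 modulo g; then g divides p^m + 1 and hence 2, forcing g = 1.  Both values of d
   are odd divisors of such numbers: (p^2k + 1)/2 divides p^2k + 1, and
   p^2k - p^k + 1 divides p^3k + 1. *)

Lemma expn_gcdn_mod1 [g x a b] :
  x ^ a = 1 %[mod g] -> x ^ b = 1 %[mod g] -> x ^ gcdn a b = 1 %[mod g].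
Proof.
have [-> _ | a_gt0 xa xb] := posnP a; first by rewrite gcd0n.
have [u _ /dvdnP[q bezout]] := Bezoutl b a_gt0.
have : x ^ (gcdn a b + u * b) = 1 %[mod g].
  by rewrite bezout mulnC expnM -modnXm xa modnXm exp1n.
by rewrite expnD [u * b]mulnC expnM -modnMmr -modnXm xb modnXm exp1n modnMmr muln1.
Qed.

Lemma gcdn_mul2_dvd n k m :
  odd (n %/ gcdn n k) -> k %| m -> gcdn n (2 * m) %| m.
Proof.
set s := gcdn n k => odd_ns km.
have sm : s %| m := dvdn_trans (dvdn_gcdr n k) km.
rewrite -(divnK (dvdn_gcdl n k)) -/s -(divnK sm) mulnA -muln_gcdl dvdn_mul //.
by rewrite mulnC Gauss_gcdl ?dvdn_gcdr ?coprimen2.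
Qed.

Lemma gcdn_expn_sub1_eq1 x n m d :
  0 < x -> odd d -> d %| x ^ m + 1 -> gcdn n (2 * m) %| m ->
  gcdn (x ^ n - 1) d = 1.
Proof.
move=> x_gt0 odd_d d_dvd gcd_dvd.
set g := gcdn _ d.
have xn : x ^ n = 1 %[mod g].
  by apply/eqP; rewrite eqn_mod_dvd ?expn_gt0 ?x_gt0 ?dvdn_gcdl.
have g_dvd : g %| x ^ m + 1 := dvdn_trans (dvdn_gcdr _ d) d_dvd.
have x2m : x ^ (2 * m) = 1 %[mod g].
  apply/eqP; rewrite eqn_mod_dvd ?expn_gt0 ?x_gt0 //.
  by rewrite mulnC expnM -{2}(exp1n 2) subn_sqr dvdn_mull.
have xm : x ^ m = 1 %[mod g].
  rewrite -(divnK gcd_dvd) mulnC expnM -modnXm.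
  by rewrite (expn_gcdn_mod1 xn x2m) modnXm exp1n.
have /gcdn_idPl <- : g %| 2 by move: g_dvd; rewrite /dvdn -modnDml xm modnDml.
by apply/eqP; rewrite -/(coprime g 2) coprimen2 (dvdn_odd (dvdn_gcdr _ d)).
Qed.

Lemma odd_half_sqr_add1 y : odd y -> odd ((y ^ 2 + 1) %/ 2).
Proof.
move=> odd_y; rewrite -(odd_double_half y) odd_y -!muln2 /=.
set z := y./2.
have -> : (1 + z * 2) ^ 2 + 1 = (2 * z * (z + 1) + 1) * 2 by nia.
by rewrite mulnK // oddD oddM mul2n odd_double.
Qed.

Lemma odd_sqr_sub_add1 y : odd (y ^ 2 - y + 1).
Proof.
rewrite oddD addbT -[y in _ - y]muln1 -mulnBr oddM.
by rewrite subn1; case: y => //= y; rewrite andNb.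
Qed.

Lemma expn3_add1 y : y ^ 3 + 1 = (y + 1) * (y ^ 2 - y + 1).
Proof. nia. Qed.

Theorem mainTheorem4 (p n k : nat) :
  prime p -> odd p -> 0 < n -> 0 < k ->
  odd (n %/ gcdn n k) ->
  gcdn (p ^ n - 1) ((p ^ (2 * k) + 1) %/ 2) = 1 /\
  gcdn (p ^ n - 1) (p ^ (2 * k) - p ^ k + 1) = 1.
Proof.
move=> /prime_gt0 p_gt0 odd_p _ _ odd_ns.
have odd_pk : odd (p ^ k) by rewrite oddX odd_p orbT.
have expnMk j : p ^ (j * k) = (p ^ k) ^ j by rewrite mulnC expnM.
have gcd_dvd j : gcdn n (2 * (j * k)) %| j * k.
  exact: gcdn_mul2_dvd odd_ns (dvdn_mull j (dvdnn k)).
split.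
- apply: gcdn_expn_sub1_eq1 p_gt0 _ _ (gcd_dvd 2); rewrite expnMk.
    exact: odd_half_sqr_add1.
  by apply: dvdn_div; rewrite dvdn2 oddD oddX odd_pk.
- apply: gcdn_expn_sub1_eq1 p_gt0 _ _ (gcd_dvd 3); rewrite ?expnMk.
    exact: odd_sqr_sub_add1.
  by rewrite expn3_add1 dvdn_mull.
Qed.
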